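(* Let $H$ be a capacitated hypergraph with an MA-ordering $v_1,\ldots,v_n$, and let $\alpha\ge0$. If $v_i$ and $v_j$ ($i\ne j$) are in an $\alpha$-tight set, then $\lambda(v_i,v_j)\ge\alpha$.
   Context: A hypergraph $H=(V,E)$ has finite vertex set $V$, a finite multiset $E$ of edges (subsets of $V$) and capacities $c:E\to\mathbb{R}_{\ge0}$. $c(S)$ is the total capacity of edges meeting both $S$ and $V\setminus S$; for distinct $s,t$, $\lambda(s,t)=\min\{c(S):|S\cap\{s,t\}|=1\}$. For subsets $A_1,\ldots,A_k$, $d(A_1,\ldots,A_k)$ is the total capacity of edges meeting every $A_i$ (a vertex $v$ stands for $\{v\}$). $V_i=\{v_1,\ldots,v_i\}$; the ordering is an MA-ordering if $d(V_{i-1},v_i)\ge d(V_{i-1},v_j)$ for all $1\le i<j\le n$. A set of consecutive vertices $v_a,\ldots,v_b$ ($a\le b$) is $\alpha$-tight if $d(V_k,v_{k+1})\ge\alpha$ for all $a\le k<b$. *)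

From HB Require Import structures.
From mathcomp Require Import all_boot all_order all_algebra.
Set Implicit Arguments. Unset Strict Implicit. Unset Printing Implicit Defensive.
Import Order.TTheory GRing.Theory Num.Theory.
Local Open Scope ring_scope.

(* A capacitated hypergraph: vertices form the finType V, edges are indexed by
   the finType E (so the edge family is a multiset), [edge e : {set V}] is the
   vertex set of edge e and [c e] its capacity (nonnegativity is a hypothesis
   of the theorem). *)

Section Hyper.
Variables (R : realFieldType) (V E : finType)
          (edge : E -> {set V}) (c : E -> R).

Definition meets (e : E) (A : {set V}) : bool := edge e :&: A != set0.

Definition cutcap (S : {set V}) : R :=
  \sum_(e | meets e S && meets e (~: S)) c e.

Definition separates (s t : V) (S : {set V}) : bool :=
  #|S :&: [set s; t]| == 1%N.

(* lambda(s,t) = min { c(S) : |S ∩ {s,t}| = 1 }; the seed value c({s}) is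
   itself a candidate when s != t, so this is the genuine minimum. *)
Definition lambda (s t : V) : R :=
  \big[Num.min/cutcap [set s]]_(S : {set V} | separates s t S) cutcap S.

Definition d2 (A B : {set V}) : R :=
  \sum_(e | meets e A && meets e B) c e.

(* An ordering v_1..v_n of V is a duplicate-free sequence containing all of V.
   0-based: v_{i+1} = nth x0 ord i and V_i = {v_1..v_i} = [set x in take i ord]. *)
Definition is_ordering (ord : seq V) : Prop :=
  uniq ord /\ size ord = #|V|.

Definition prefix_set (ord : seq V) (i : nat) : {set V} :=
  [set x in take i ord].

(* MA-ordering: d(V_{i-1}, v_i) >= d(V_{i-1}, v_j) for 1 <= i < j <= n,
   written 0-based with i' = i-1, j' = j-1. *)
Definition MA_ordering (x0 : V) (ord : seq V) : Prop :=
  is_ordering ord /\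
  forall i j : nat, (i < j)%N -> (j < size ord)%N ->
    d2 (prefix_set ord i) [set nth x0 ord j] <=
    d2 (prefix_set ord i) [set nth x0 ord i].

(* The consecutive vertices at 0-based positions a..b (a <= b < n) form an
   alpha-tight set: d(V_k, v_{k+1}) >= alpha for all 1-based a+1 <= k < b+1,
   i.e. for 0-based positions k with a < k <= b, d(V_k, v_{k+1}) with
   V_k = take k ord and v_{k+1} = nth x0 ord k. *)
Definition alpha_tight (x0 : V) (ord : seq V) (alpha : R) (a b : nat) : Prop :=
  (a <= b)%N /\ (b < size ord)%N /\
  forall k : nat, (a < k)%N -> (k <= b)%N ->
    alpha <= d2 (prefix_set ord k) [set nth x0 ord k].

End Hyper.

From HB Require Import structures.
From mathcomp Require Import all_boot all_order all_algebra.
Import Order.TTheory GRing.Theory Num.Theory.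
Local Open Scope ring_scope.

(* Let S separate v_i from v_j.  Scanning the tight block from v_i to v_j,
   S switches sides between some consecutive vertices v_k and v_(k+1) of the
   block, and tightness gives alpha <= d(V_k, v_(k+1)).  The pendant-pair
   argument for MA-orderings bounds d(V_k, v_(k+1)) by c(S): by induction on
   j, d(V_j, v_m) is at most the capacity of the edges cut by S inside
   V_j + v_m, whenever S separates v_m from v_j. *)

Set Implicit Arguments. Unset Strict Implicit.

Section Hypergraph.
Variables (R : realFieldType) (V E : finType) (edge : E -> {set V}) (c : E -> R).
Hypothesis c_ge0 : forall e, 0 <= c e.

Lemma meetsP e (A : {set V}) :
  reflect (exists2 x, x \in edge e & x \in A) (meets edge e A).
Proof.
rewrite /meets; apply: (iffP (set0Pn _)) => [[x]|[x ex xA]].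
  by rewrite inE => /andP[ex xA]; exists x.
by exists x; rewrite inE ex xA.
Qed.

Lemma meetsS e (A B : {set V}) : A \subset B -> meets edge e A -> meets edge e B.
Proof. by move=> /subsetP sAB /meetsP[x ex xA]; apply/meetsP; exists x; rewrite ?sAB. Qed.

Lemma sumr_le_sub (P Q : pred E) :
  {subset P <= Q} -> \sum_(e | P e) c e <= \sum_(e | Q e) c e.
Proof.
move=> sPQ; rewrite [X in _ <= X](bigID P) /=.
rewrite (eq_bigl P) => [|e]; last exact/andb_idl/sPQ.
by rewrite lerDl sumr_ge0.
Qed.

Lemma sumr_disjointU_le (A B T : pred E) : [disjoint A & B] ->
  {subset A <= T} -> {subset B <= T} ->
  \sum_(e | A e) c e + \sum_(e | B e) c e <= \sum_(e | T e) c e.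
Proof.
by move=> dAB sAT sBT; rewrite -bigU //; apply: sumr_le_sub => e /orP[]; [apply: sAT | apply: sBT].
Qed.

Definition cut_within (S X : {set V}) (e : E) : bool :=
  meets edge e (X :&: S) && meets edge e (X :\: S).

(* [cutcap_within S X] is c(S) in the subhypergraph induced by X. *)
Definition cutcap_within (S X : {set V}) : R := \sum_(e | cut_within S X e) c e.

Lemma cut_withinS (S X Y : {set V}) e :
  X \subset Y -> cut_within S X e -> cut_within S Y e.
Proof.
move=> sXY /andP[eXS eXS']; apply/andP; split.
  by apply: meetsS eXS; apply: setSI.
by apply: meetsS eXS'; apply: setSD.
Qed.

Lemma cut_within_setU1_meets (S X : {set V}) u e :
  cut_within S (X :|: [set u]) e -> meets edge e X.
Proof.
case/andP => /meetsP[x ex] + /meetsP[y ey].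
rewrite !inE => /andP[/orP[xX|/eqP xu] xS] /andP[yS /orP[yX|/eqP yu]].
- by apply/meetsP; exists x.
- by apply/meetsP; exists x.
- by apply/meetsP; exists y.
- by move: xS yS; rewrite xu yu => ->.
Qed.

Lemma cut_within_pair (S X : {set V}) e u w :
  u \in X -> w \in X -> u \in edge e -> w \in edge e ->
  (u \in S) != (w \in S) -> cut_within S X e.
Proof.
move=> uX wX ue we; case: (boolP (u \in S)) => uS; case: (boolP (w \in S)) => wS //= _.
  by apply/andP; split; apply/meetsP; [exists u | exists w]; rewrite // !inE ?uS ?wS ?uX ?wX.
by apply/andP; split; apply/meetsP; [exists w | exists u]; rewrite // !inE ?uS ?wS ?uX ?wX.
Qed.

Lemma cutcap_within_le_cutcap (S X : {set V}) : cutcap_within S X <= cutcap edge c S.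
Proof.
apply: sumr_le_sub => e /andP[eXS eXS']; apply/andP; split.
  by apply: meetsS eXS; apply: subsetIr.
by apply: meetsS eXS'; rewrite setDE subsetIr.
Qed.

(* The edges that meet
   X :|: [set u] and w but not X contain both u and w, hence are cut; the edges
   counted by the hypothesis meet X, so the two families are disjoint. *)
Lemma cutcap_within_setU1 (X S : {set V}) u w y :
  (w \in S) != (u \in S) -> (y == u) || (y == w) ->
  d2 edge c X [set w] <= cutcap_within S (X :|: [set y]) ->
  d2 edge c (X :|: [set u]) [set w] <= cutcap_within S (X :|: [set u] :|: [set w]).
Proof.
move=> wSu yuw le_dX.
set Y := X :|: [set u] :|: [set w].
pose new e := meets edge e (X :|: [set u]) && meets edge e [set w] && ~~ meets edge e X.
have new_cut e : new e -> cut_within S Y e.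
  case/andP => /andP[/meetsP[x ex] + /meetsP[w' ew' /set1P w'w]] eX.
  rewrite !inE => /orP[xX|/eqP xu]; first by case/negP: eX; apply/meetsP; exists x.
  by apply: (cut_within_pair _ _ _ _ wSu); rewrite ?inE ?eqxx ?orbT // -?w'w -?xu.
rewrite /d2 (bigID (fun e => meets edge e X)) /=.
rewrite (eq_bigl (fun e => meets edge e X && meets edge e [set w])) => [|e]; last first.
  case: (boolP (meets edge e X)) => eX; rewrite ?andbF ?andbT //.
  by rewrite (meetsS _ eX) ?subsetUl.
apply: le_trans (lerD le_dX (lexx _)) _; apply: sumr_disjointU_le.
- rewrite disjoint_subset; apply/subsetP => e /cut_within_setU1_meets eX.
  by apply/negP => /andP[_]; rewrite eX.
- move=> e; apply: cut_withinS; rewrite /Y; case/orP: yuw => /eqP ->.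
    exact: subsetUl.
  by rewrite setUSS ?subsetUl.
- exact: new_cut.
Qed.

Section MAOrdering.
Variables (x0 : V) (ord : seq V).
Hypothesis ma : MA_ordering edge c x0 ord.

Local Notation v k := (nth x0 ord k).
Local Notation P k := (prefix_set ord k).

Lemma prefix_set0 : P 0 = set0.
Proof. by apply/setP => x; rewrite !inE take0. Qed.

Lemma prefix_setS k : (k < size ord)%N -> P k.+1 = P k :|: [set v k].
Proof.
by move=> lt_k; apply/setP => x; rewrite /prefix_set (take_nth x0 lt_k) !inE mem_rcons inE orbC.
Qed.

(* For j = 0 the separation hypothesis mentions v 0.-1 = v 0; it is then
   irrelevant since P 0 is empty. *)
Lemma ma_prefix_cut_bound (S : {set V}) j m : (j <= m)%N -> (m < size ord)%N ->
  (v m \in S) != (v j.-1 \in S) ->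
  d2 edge c (P j) [set v m] <= cutcap_within S (P j :|: [set v m]).
Proof.
elim: j m => [|j IH] m le_jm lt_m vS.
  by rewrite /d2 big_pred0 ?sumr_ge0 // => e; rewrite prefix_set0 /meets setI0 eqxx.
have lt_j : (j < size ord)%N := ltn_trans le_jm lt_m.
rewrite prefix_setS //; case: (boolP ((v j \in S) == (v j.-1 \in S))) => [/eqP vjS|vjS].
- apply: (cutcap_within_setU1 (y := v m)); rewrite ?eqxx ?orbT //.
  by apply: IH; rewrite ?(ltnW le_jm) // -vjS.
- apply: (cutcap_within_setU1 (y := v j)); rewrite ?eqxx //.
  apply: le_trans (IH j (leqnn j) lt_j vjS).
  by case: ma => _; apply.
Qed.

Lemma ma_pendant_cut (S : {set V}) k : (0 < k < size ord)%N ->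
  (v k \in S) != (v k.-1 \in S) -> d2 edge c (P k) [set v k] <= cutcap edge c S.
Proof.
case/andP=> _ lt_k vkS.
exact: le_trans (ma_prefix_cut_bound (leqnn k) lt_k vkS) (cutcap_within_le_cutcap _ _).
Qed.

End MAOrdering.

Lemma separates_mem_neq (s t : V) (S : {set V}) :
  s != t -> separates s t S -> (s \in S) != (t \in S).
Proof.
rewrite /separates => st; case: (boolP (s \in S)) => sS; case: (boolP (t \in S)) => tS //=.
  suff -> : S :&: [set s; t] = [set s; t] by rewrite cards2 st.
  by apply/setIidPr; rewrite subUset !sub1set sS tS.
suff -> : S :&: [set s; t] = set0 by rewrite cards0.
apply/setP => x; rewrite !inE; apply/negbTE/andP => -[xS /orP[] /eqP xst].
  by move: sS; rewrite -xst xS.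
by move: tS; rewrite -xst xS.
Qed.

Lemma lambda_ge (s t : V) (x : R) : s != t ->
  (forall S : {set V}, (s \in S) != (t \in S) -> x <= cutcap edge c S) ->
  x <= lambda edge c s t.
Proof.
move=> st x_le; apply: (big_ind (fun y => x <= y)).
- by apply: x_le; rewrite !inE eqxx [t == s]eq_sym (negbTE st).
- by move=> y z xy xz; rewrite le_min xy xz.
- by move=> S /(separates_mem_neq st); apply: x_le.
Qed.

End Hypergraph.

Lemma exists_flip (f : nat -> bool) i j : (i < j)%N -> f i != f j ->
  exists2 k, (i < k <= j)%N & f k.-1 != f k.
Proof.
elim: j => [//|j IH]; rewrite ltnS leq_eqVlt => /orP[/eqP <-|lt_ij] fij.
  by exists i.+1; rewrite ?leqnn.
case: (boolP (f j != f j.+1)) => [fj|/negPn/eqP fj]; first by exists j.+1; rewrite // leqnn andbT ltnS ltnW.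
by have [|k /andP[ik kj] fk] := IH lt_ij; [rewrite fj | exists k; rewrite ?ik ?leqW].
Qed.

Lemma alpha_tight_cut (R : realFieldType) (V E : finType) (edge : E -> {set V})
    (c : E -> R) (x0 : V) (ord : seq V) (alpha : R) (a b i j : nat) (S : {set V}) :
  (forall e, 0 <= c e) -> MA_ordering edge c x0 ord ->
  alpha_tight edge c x0 ord alpha a b -> (a <= i)%N -> (j <= b)%N -> (i < j)%N ->
  (nth x0 ord i \in S) != (nth x0 ord j \in S) -> alpha <= cutcap edge c S.
Proof.
move=> c_ge0 ma [_ [lt_b tight]] le_ai le_jb lt_ij vS.
have [k /andP[lt_ik le_kj] vkS] := exists_flip (f := fun k => nth x0 ord k \in S) lt_ij vS.
have le_kb : (k <= b)%N := leq_trans le_kj le_jb.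
apply: le_trans (tight k (leq_ltn_trans le_ai lt_ik) le_kb) _.
apply: ma_pendant_cut; rewrite 1?eq_sym //.
by rewrite (leq_ltn_trans _ lt_ik) // (leq_ltn_trans le_kb).
Qed.

Theorem mainTheorem19 (R : realFieldType) (V E : finType)
  (edge : E -> {set V}) (c : E -> R) (x0 : V) (ord : seq V) (alpha : R)
  (a b i j : nat) :
  (forall e, 0 <= c e) ->
  MA_ordering edge c x0 ord ->
  0 <= alpha ->
  alpha_tight edge c x0 ord alpha a b ->
  (a <= i <= b)%N -> (a <= j <= b)%N -> i <> j ->
  alpha <= lambda edge c (nth x0 ord i) (nth x0 ord j).
Proof.
move=> c_ge0 ma _ tight /andP[le_ai le_ib] /andP[le_aj le_jb] /eqP ij.
have lt_b : (b < size ord)%N by case: tight => _ [].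
have vij : nth x0 ord i != nth x0 ord j.
  case: ma => [[uniq_ord _] _].
  by rewrite nth_uniq // ?(leq_ltn_trans le_ib) ?(leq_ltn_trans le_jb).
apply: lambda_ge vij _ => S vS.
case: (ltngtP i j) ij => // [lt_ij|lt_ji] _.
- exact: alpha_tight_cut c_ge0 ma tight le_ai le_jb lt_ij vS.
- by apply: alpha_tight_cut c_ge0 ma tight le_aj le_ib lt_ji _; rewrite eq_sym.
Qed.
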